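(* Let $V$ be a finite-dimensional real vector space, $\Gamma$ a semigroup with identity $e$, and $\rho:\Gamma\to\mathrm{End}(V)$ an expansive endomorphism action with $\rho(e)=\mathrm{Id}$. Then there exists a finitely generated subsemigroup $\Gamma_0\subset\Gamma$ (containing $e$) whose action on $V$ (restriction of $\rho$) is expansive.
   Context: The action is expansive if there is a neighborhood $U$ of $0$ in $V$ with $\bigcap_{\gamma}\rho(\gamma)^{-1}(U)=\{0\}$; equivalently, every non-zero vector has an unbounded orbit. *)

From HB Require Import structures.
From mathcomp Require Import all_boot all_order all_algebra.
From mathcomp Require Import all_classical all_reals all_analysis.
Set Implicit Arguments. Unset Strict Implicit. Unset Printing Implicit Defensive.
Import Order.TTheory GRing.Theory Num.Theory.
Import numFieldNormedType.Exports.
Local Open Scope classical_set_scope.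
Local Open Scope ring_scope.

Inductive generated (G : Type) (mul : G -> G -> G) (S : set G) : G -> Prop :=
  | gen_base : forall x, S x -> generated mul S x
  | gen_mul : forall x y, generated mul S x -> generated mul S y ->
                          generated mul S (mul x y).

(* V = R^n as column vectors, End(V) = n x n matrices acting by M *m v. *)
Definition expansive (R : realType) (n : nat) (G : Type)
  (rho : G -> 'M[R]_n) (I : set G) : Prop :=
  exists U : set 'cV[R]_n,
    nbhs (0 : 'cV[R]_n) U /\
    \bigcap_(g in I) [set v : 'cV[R]_n | U (rho g *m v)] = [set 0].

From HB Require Import structures.
From mathcomp Require Import all_boot all_order all_algebra.
From mathcomp Require Import all_classical all_reals all_analysis.
From mathcomp Require Import lra.
Import Order.TTheory GRing.Theory Num.Theory.
Import numFieldNormedType.Exports.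
Local Open Scope classical_set_scope.
Local Open Scope ring_scope.

(* Expansiveness means every nonzero vector can be pushed out of a fixed ball,
   so by homogeneity some element of Gamma at least doubles its norm.  By
   compactness of the unit sphere, finitely many elements already suffice for
   all vectors.  Iterating them, the semigroup they generate stretches every
   nonzero vector by arbitrarily large factors, which is expansiveness. *)

Section MatrixNorm.
Variable R : realFieldType.

Lemma mx_norm_entry m n (x : 'M[R]_(m, n)) i j : `|x i j| <= `|x|.
Proof.
rewrite [leRHS]/Num.Def.normr /= mx_normrE.
exact: (le_bigmax _ (fun ij : 'I_m * 'I_n => `|x ij.1 ij.2|) (i, j)).
Qed.

Lemma mx_norm_le m n (x : 'M[R]_(m, n)) c :
  0 <= c -> (forall i j, `|x i j| <= c) -> `|x| <= c.
Proof.
move=> c_ge0 xc; rewrite [leLHS]/Num.Def.normr /= mx_normrE.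
by apply/bigmax_leP; split=> // ij _; exact: xc.
Qed.

Lemma mx_norm_tr m n (x : 'M[R]_(m, n)) : `|x^T| = `|x|.
Proof.
apply/eqP; rewrite eq_le; apply/andP; split; apply: mx_norm_le => // i j.
  by rewrite mxE mx_norm_entry.
have -> : x i j = x^T j i by rewrite mxE.
exact: mx_norm_entry.
Qed.

Lemma mx_norm_mul m p q (A : 'M[R]_(m, p)) (B : 'M[R]_(p, q)) :
  `|A *m B| <= p%:R * `|A| * `|B|.
Proof.
apply: mx_norm_le => [|i j]; first by rewrite !mulr_ge0.
rewrite mxE; apply: le_trans (ler_norm_sum _ _ _) _.
apply: le_trans (_ : \sum_(k < p) `|A| * `|B| <= _).
  by apply: ler_sum => k _; rewrite normrM ler_pM ?mx_norm_entry.
by rewrite sumr_const card_ord -mulrA mulr_natl.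
Qed.

Lemma mulmxr_continuous m p q (A : 'M[R]_(p, q)) :
  continuous (fun B : 'M[R]_(m, p) => B *m A).
Proof.
move=> B; apply/(@cvgrPdist_lt _ _ _ (nbhs B)) => eps eps_gt0.
have C_gt0 : 0 < `|A| * p%:R + 1 by rewrite ltr_wpDl ?mulr_ge0.
apply/nbhs_ballP; exists (eps / (`|A| * p%:R + 1)); first exact: divr_gt0.
move=> B'; rewrite -ball_normE /= ltr_pdivlMr // => BB'.
rewrite -mulmxBl; apply: le_lt_trans (@mx_norm_mul m p q (B - B') A) _.
apply: le_lt_trans BB'.
by rewrite [leLHS]mulrAC [leLHS]mulrC ler_wpM2l // mulrC lerDl.
Qed.
End MatrixNorm.

Section Expansive.
Context {R : realType} {n : nat}.
Implicit Types (v : 'cV[R]_n) (w : 'rV[R]_n).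

Lemma expansiveP (G : Type) (rho : G -> 'M[R]_n) (I : set G) :
  expansive rho I <->
  exists2 eps : R, 0 < eps &
    forall v, v != 0 -> exists2 g, I g & eps <= `|rho g *m v|.
Proof.
split=> [[U [/nbhs_ballP[eps eps_gt0 epsU] IU]] | [eps eps_gt0 Ieps]].
  exists eps => // v v_neq0; apply: contrapT => small.
  suff : (\bigcap_(g in I) [set v | U (rho g *m v)]) v.
    by rewrite IU => /= v0; rewrite v0 eqxx in v_neq0.
  move=> g Ig; apply: epsU; rewrite -ball_normE /= sub0r normrN ltNge.
  by apply/negP => epsg; apply: small; exists g.
exists [set u | `|u| < eps]; split.
  by apply/nbhs_ballP; exists eps => // u; rewrite -ball_normE /= sub0r normrN.
apply/seteqP; split=> v /=; last by move=> -> g _; rewrite /= mulmx0 normr0.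
move=> Iv; apply/eqP/negPn/negP => /Ieps[g Ig].
by rewrite leNgt => /negP; apply; exact: Iv.
Qed.

Lemma expansive_double {G : Type} {rho : G -> 'M[R]_n} {I : set G} :
  expansive rho I ->
  forall v, v != 0 -> exists2 g, I g & 2 * `|v| < `|rho g *m v|.
Proof.
move=> /expansiveP[eps eps_gt0 Ieps] v v_neq0.
have v_gt0 : 0 < `|v| by rewrite normr_gt0.
have c_gt0 : 0 < eps / (3 * `|v|) by rewrite divr_gt0 ?mulr_gt0.
have [|g Ig] := Ieps (eps / (3 * `|v|) *: v).
  by rewrite scaler_eq0 negb_or gt_eqF.
rewrite -scalemxAr normrZ gtr0_norm // => epsg; exists g => //.
move: epsg; rewrite -ler_pdivrMl // invf_div divfK ?gt_eqF //; lra.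
Qed.

Lemma unit_sphere_compact : compact [set w : 'rV[R]_n | `|w| = 1].
Proof.
apply: bounded_closed_compact.
  by exists 1; split=> [|r r_gt1 w /= ->]; [exact: num_real | exact: ltW].
rewrite -[X in closed X]/((fun w : 'rV[R]_n => `|w|) @^-1` [set x : R | x = 1]).
apply: preimage_closed; last exact: closed_eq.
by move=> w _; exact: norm_continuous.
Qed.

Lemma open_norm_mulmxr_gt m (A : 'M[R]_(n, m)) (c : R) :
  open [set u : 'rV[R]_n | c < `|u *m A|].
Proof.
rewrite -[X in open X]/((fun u => `|u *m A|) @^-1` [set x | c < x]).
apply: open_comp; last exact: open_gt.
move=> u _; apply: continuous_comp; first exact: mulmxr_continuous.
exact: norm_continuous.
Qed.

Lemma expanding_finite_subfamily {T : Type} {M : T -> 'M[R]_n} {c : R} :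
  (forall v, v != 0 -> exists t, c * `|v| < `|M t *m v|) ->
  exists k (t : 'I_k -> T),
    forall v, v != 0 -> exists i, c * `|v| < `|M (t i) *m v|.
Proof.
move=> Mc.
(* [choice] below needs an inhabitant of [T]; if [T] is empty, [Mc] forces
   every vector to be [0]. *)
have [[t0 _]|T0] := pselect (exists t : T, True); last first.
  exists 0, (fun i : 'I_0 => False_rect T (notF (ltn_ord i))) => v /Mc[t _].
  by case: T0; exists t.
(* The sphere is taken among row vectors, where compactness is available. *)
pose K := [set w : 'rV[R]_n | `|w| = 1].
have norm_mulmx_tr t w : `|M t *m w^T| = `|w *m (M t)^T|.
  by rewrite -mx_norm_tr trmx_mul trmxK.
have /choice[tw twK] : forall w, exists t, K w -> c < `|w *m (M t)^T|.
  move=> w; have [Kw|notKw] := pselect (K w); last by exists t0 => /notKw.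
  have [|t ct] := Mc w^T; first by rewrite -normr_gt0 mx_norm_tr Kw ltr01.
  by exists t => _; move: ct; rewrite -norm_mulmx_tr mx_norm_tr Kw mulr1.
pose U w := [set u : 'rV[R]_n | c < `|u *m (M (tw w))^T|].
have U_open w : K w -> open (U w) by move=> _; exact: open_norm_mulmxr_gt.
have K_cover : K `<=` \bigcup_(w in K) U w.
  by move=> w Kw; exists w; last exact: twK.
have := unit_sphere_compact; rewrite compact_cover.
move=> /(_ _ K U U_open K_cover)[D _ KD].
pose s := finmap.enum_fset D.
exists (size s), (fun i => tw (nth 0 s i)) => v v_neq0.
have v_gt0 : 0 < `|v^T| by rewrite normr_gt0 trmx_eq0.
have /KD[w' w'D vw'] : K (`|v^T|^-1 *: v^T).
  by rewrite /K /= normrZ normfV normr_id mulVf ?gt_eqF.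
have w'_idx : (index w' s < size s)%N by rewrite index_mem; exact: w'D.
exists (Ordinal w'_idx); rewrite /= nth_index ?index_mem //.
move: vw'; rewrite /U /= -scalemxAl normrZ normfV normr_id mx_norm_tr.
by rewrite -norm_mulmx_tr trmxK mulrC ltr_pdivlMr // -mx_norm_tr.
Qed.

Section Generated.
Context {G : Type} {mul : G -> G -> G} {rho : G -> 'M[R]_n}.
Hypothesis rhoM : forall a b, rho (mul a b) = rho a *m rho b.
Variable S : set G.
Hypothesis S_double :
  forall v, v != 0 -> exists2 s, S s & 2 * `|v| < `|rho s *m v|.

Lemma generated_norm_growth m v : v != 0 ->
  exists2 h, generated mul S h & m.+1%:R * `|v| <= `|rho h *m v|.
Proof.
move=> v_neq0; have v_gt0 : 0 < `|v| by rewrite normr_gt0.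
elim: m => [|m [h Sh hv]].
  by have [s Ss sv] := S_double _ v_neq0; exists s; [exact: gen_base | lra].
have v_le : `|v| <= `|rho h *m v|.
  by apply: le_trans hv; rewrite ler_peMl // ler1n.
have [|s Ss su] := S_double (rho h *m v).
  by rewrite -normr_gt0; exact: lt_le_trans v_le.
exists (mul s h); first by apply: gen_mul => //; exact: gen_base.
by rewrite rhoM -mulmxA -addn1 natrD mulrDl mul1r; lra.
Qed.

Lemma generated_expansive : expansive rho (generated mul S).
Proof.
apply/expansiveP; exists 1 => // v v_neq0.
have v_gt0 : 0 < `|v| by rewrite normr_gt0.
have [h Sh hv] := generated_norm_growth (Num.bound `|v|^-1) _ v_neq0.
exists h => //; apply: le_trans hv; rewrite -ler_pdivrMr // div1r ltW //.
by apply: lt_le_trans (archi_boundP _) _; rewrite ?invr_ge0 // ler_nat.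
Qed.

End Generated.
End Expansive.

Theorem lemma3p1 (R : realType) (n : nat) (G : Type)
  (mul : G -> G -> G) (e : G)
  (mulA : associative mul) (mul1g : left_id e mul) (mulg1 : right_id e mul)
  (rho : G -> 'M[R]_n)
  (rhoM : forall a b, rho (mul a b) = rho a *m rho b)
  (rho1 : rho e = 1%:M)
  (hexp : expansive rho setT) :
  exists (k : nat) (g : 'I_k -> G),
    expansive rho (generated mul (range g `|` [set e])).
Proof.
have rho_double (v : 'cV[R]_n) : v != 0 -> exists g, 2 * `|v| < `|rho g *m v|.
  by move=> /(expansive_double hexp)[g _]; exists g.
have [k [g g_double]] := expanding_finite_subfamily rho_double.
exists k, g; apply: (generated_expansive rhoM) => v /g_double[i gi].
by exists (g i) => //; left; exists i.
Qed.
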